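(* In the setting below with $P=\mathfrak S$, the worst case setting and the absolute error criterion, assume $\lambda_1\le1$. Then $\{S_d\}$ is strongly polynomially tractable if and only if $\lambda\in\ell_\tau$ for some $\tau>0$ and either $\lambda_1<1$, or $1=\lambda_1>\lambda_2$ and $d-\#I_d\in O(1)$. Moreover, $\{S_d\}$ is polynomially tractable if and only if $\lambda\in\ell_\tau$ for some $\tau>0$ and either $\lambda_1<1$, or $\lambda_1=1$ and $d-\#I_d\in O(\ln d)$.
   Context: Setting: $S_1:H_1\to G_1$ is a compact linear operator between real Hilbert spaces ($H_1$ infinite-dimensional separable); $\lambda=(\lambda_m)_{m\in\mathbb N}$, $\lambda_1\ge\lambda_2\ge\dots\ge0$, are the eigenvalues of $S_1^\dagger S_1$. $S_d=S_1^{\otimes d}:H_1^{\otimes d}\to G_1^{\otimes d}$. For each $d$ fix $\emptyset\ne I_d=\{i_1<\dots<i_{a_d}\}\subset\{1,\dots,d\}$ ($I_1=\{1\}$), put $a_d=\#I_d$, $b_d=d-a_d$, and fix one type $P\in\{\mathfrak S,\mathfrak A\}$ for all $d$; the problem $\{S_d\}$ is the family of restrictions of $S_d$ to the $I_d$-symmetric subspace (if $P=\mathfrak S$) or $I_d$-antisymmetric subspace (if $P=\mathfrak A$) of $H_1^{\otimes d}$, i.e. the range of $\frac1{a_d!}\sum_{\pi}(\pm1)U_\pi$, the sum over permutations $\pi$ of $\{1,\dots,d\}$ fixing all points outside $I_d$, $U_\pi(f_1\otimes\cdots\otimes f_d)=f_{\pi(1)}\otimes\cdots\otimes f_{\pi(d)}$,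 sign $(-1)^{|\pi|}$ used for $\mathfrak A$. Let $\nabla_d=\{k\in\mathbb N^d:k_{i_1}\le\dots\le k_{i_{a_d}}\}$ for $P=\mathfrak S$ and with strict inequalities for $P=\mathfrak A$; $\lambda_{d,k}=\prod_{l=1}^d\lambda_{k_l}$; $\psi:\mathbb N\to\nabla_d$ a bijection with $\lambda_{d,\psi(1)}\ge\lambda_{d,\psi(2)}\ge\cdots$. These are exactly the eigenvalues of $S_d^\dagger S_d$ on the subspace, and the information complexity (absolute error) is $n(\epsilon,d)=\#\{k\in\nabla_d:\lambda_{d,k}>\epsilon^2\}$, the initial error $\epsilon^{\rm init}_d=\sqrt{\lambda_{d,\psi(1)}}$ (equal to $\lambda_1^{d/2}$ if $P=\mathfrak S$, and $\sqrt{\lambda_1^{b_d}\lambda_1\lambda_2\cdots\lambda_{a_d}}$ if $P=\mathfrak A$). Polynomially tractable: $\exists C,p>0,q\ge0$ with $n(\epsilon,d)\le C\epsilon^{-p}d^q$ for all $d\in\mathbb N,\epsilon\in(0,1]$; strongly polynomially tractable: this with $q=0$. Standing assumptions: $\lambda_2>0$ and $\epsilon_d^{\rm init}>0$ for all $d$. $\ell_\tau$: sequences with $\|\lambda\|_{\ell_\tau}^\tau=\sum_m\lambda_m^\tau<\infty$. *)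

From Stdlib Require Import Reals Lra Lia List.
Import ListNotations.
Open Scope R_scope.

(* Real power x^t for x >= 0, t > 0 (with 0^t = 0). *)
Definition rpow (x t : R) : R := if Req_dec_T x 0 then 0 else Rpower x t.

(* lambda is indexed from 1: lambda_m = lam m for m >= 1 (lam 0 is unused). *)
Definition admissible_eigs (lam : nat -> R) : Prop :=
  (forall m, (1 <= m)%nat -> 0 <= lam m) /\
  (forall m, (1 <= m)%nat -> lam (S m) <= lam m) /\
  Un_cv lam 0.  (* S_1 compact: eigenvalues tend to 0 *)

(* I d i = true  iff  i \in I_d ; I_d is a nonempty subset of {1..d}, I_1 = {1}. *)
Definition admissible_I (I : nat -> nat -> bool) : Prop :=
  (forall d i, I d i = true -> (1 <= i <= d)%nat) /\
  (forall d, (1 <= d)%nat -> exists i, I d i = true) /\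
  I 1%nat 1%nat = true.

Definition card_I (I : nat -> nat -> bool) (d : nat) : nat :=
  length (filter (fun i => I d i) (seq 1 d)).

Definition b_of (I : nat -> nat -> bool) (d : nat) : nat := (d - card_I I d)%nat.

(* A multi-index k = (k_1,...,k_d) in N^d (N = {1,2,...}) is a list of length d;
   k_l = nth (l-1) k 0. *)
Definition kth (k : list nat) (l : nat) : nat := nth (l - 1) k 0%nat.

Definition in_nabla_sym (I : nat -> nat -> bool) (d : nat) (k : list nat) : Prop :=
  length k = d /\ (forall x, In x k -> (1 <= x)%nat) /\
  (forall i j, I d i = true -> I d j = true -> (i < j)%nat -> (kth k i <= kth k j)%nat).

Definition lam_dk (lam : nat -> R) (k : list nat) : R := fold_right Rmult 1 (map lam k).

(* #A <= N, for a possibly infinite set A *)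
Definition card_le {T : Type} (A : T -> Prop) (N : R) : Prop :=
  forall l : list T, NoDup l -> (forall x, In x l -> A x) -> INR (length l) <= N.

Definition info_compl_le (lam : nat -> R) (I : nat -> nat -> bool) (eps : R) (d : nat) (N : R) : Prop :=
  card_le (fun k => in_nabla_sym I d k /\ lam_dk lam k > eps ^ 2) N.

Definition poly_tractable (lam : nat -> R) (I : nat -> nat -> bool) : Prop :=
  exists C p q, C > 0 /\ p > 0 /\ q >= 0 /\
    forall d eps, (1 <= d)%nat -> 0 < eps <= 1 ->
      info_compl_le lam I eps d (C * Rpower eps (- p) * Rpower (INR d) q).

Definition strongly_poly_tractable (lam : nat -> R) (I : nat -> nat -> bool) : Prop :=
  exists C p, C > 0 /\ p > 0 /\
    forall d eps, (1 <= d)%nat -> 0 < eps <= 1 ->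
      info_compl_le lam I eps d (C * Rpower eps (- p)).

Definition in_ell (lam : nat -> R) (tau : R) : Prop :=
  exists s, infinite_sum (fun n => rpow (lam (S n)) tau) s.

Definition b_bounded (I : nat -> nat -> bool) : Prop :=
  exists C, forall d, (1 <= d)%nat -> INR (b_of I d) <= C.

Definition b_log (I : nat -> nat -> bool) : Prop :=
  exists C, forall d, (2 <= d)%nat -> INR (b_of I d) <= C * ln (INR d).

From Stdlib Require Import Reals.
From Stdlib Require Import Lra Lia List Sorted.
Import ListNotations.
Open Scope R_scope.

(** Fix [m0] and [tau > 0] with [sum_{j > m0} lambda_j^tau <= 1/2] (such a
    [tau] exists whenever [lambda] is in some [l_tau0] and [lambda_{m0+1} < 1]). A counted
    multi-index [k] of [nabla_d] is determined by its key: its values on the [b_d] free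
    coordinates, followed by its (nondecreasing) values [>= 2] on the symmetric coordinates.
    Giving the key [z] the weight [prod_{x in z} lambda_x^tau / eps^{2 tau}] (at least [1],
    since [lambda_1 <= 1]) and summing over all keys yields
    [n(eps, d) <= 2 (m0+1)^{b_d} (a_d+1)^{m0-1} eps^{-2 tau}]. The choices [m0 = 0]
    ([lambda_1 < 1]), [m0 = 1] ([lambda_2 < 1], [b_d = O(1)]) and [m0] with
    [lambda_{m0+1} < 1] ([b_d = O(ln d)]) give the sufficient conditions.

    Lower bounds. [d = 1] gives [lambda_m^p <= C^2 2^p / m^2], hence [lambda] in [l_p].
    If [lambda_1 = lambda_2 = 1], the [d+1] nondecreasing [{1,2}]-valued indices all have
    [lambda_{d,k} = 1]. If [lambda_1 = 1], marking one of [K] free slots in each of [j]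
    groups gives [K^j] indices with [lambda_{d,k} >= lambda_2^j], which forces [b_d = O(1)]
    (strong tractability) or [b_d = O(ln d)] (tractability). *)

Section ListSums.
Context {A : Type}.

Definition sumR (g : A -> R) (l : list A) : R := fold_right (fun x acc => g x + acc) 0 l.
Definition prodR (g : A -> R) (l : list A) : R := fold_right (fun x acc => g x * acc) 1 l.

Lemma sumR_app (g : A -> R) l1 l2 : sumR g (l1 ++ l2) = sumR g l1 + sumR g l2.
Proof. induction l1; simpl; [lra|]. rewrite IHl1; lra. Qed.

Lemma prodR_app (g : A -> R) l1 l2 : prodR g (l1 ++ l2) = prodR g l1 * prodR g l2.
Proof. induction l1; simpl; [lra|]. rewrite IHl1; lra. Qed.

Lemma sumR_ext (g h : A -> R) l : (forall x, In x l -> g x = h x) -> sumR g l = sumR h l.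
Proof. induction l; simpl; intros H; [lra|]. rewrite H, IHl; auto. Qed.

Lemma sumR_le (g h : A -> R) l : (forall x, In x l -> g x <= h x) -> sumR g l <= sumR h l.
Proof.
  induction l; simpl; intros H; [lra|].
  assert (g a <= h a) by auto. assert (sumR g l <= sumR h l) by auto. lra.
Qed.

Lemma sumR_nonneg (g : A -> R) l : (forall x, In x l -> 0 <= g x) -> 0 <= sumR g l.
Proof.
  induction l; simpl; intros H; [lra|].
  assert (0 <= g a) by auto. assert (0 <= sumR g l) by auto. lra.
Qed.

Lemma sumR_scal (g : A -> R) c l : sumR (fun x => c * g x) l = c * sumR g l.
Proof. induction l; simpl; [lra|]. rewrite IHl; lra. Qed.

Lemma sumR_le_len (g : A -> R) c l : (forall x, In x l -> g x <= c) -> sumR g l <= c * INR (length l).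
Proof.
  induction l as [|a l IH]; intros H; simpl sumR; [simpl; lra|].
  change (length (a :: l)) with (S (length l)). rewrite S_INR.
  assert (g a <= c) by (apply H; simpl; auto).
  assert (sumR g l <= c * INR (length l)) by (apply IH; intros; apply H; simpl; auto). lra.
Qed.

Lemma len_le_sumR (g : A -> R) l : (forall x, In x l -> 1 <= g x) -> INR (length l) <= sumR g l.
Proof.
  induction l as [|a l IH]; intros H; [simpl; lra|].
  change (length (a :: l)) with (S (length l)). rewrite S_INR. simpl sumR.
  assert (1 <= g a) by (apply H; simpl; auto).
  assert (INR (length l) <= sumR g l) by (apply IH; intros; apply H; simpl; auto). lra.
Qed.

Lemma prodR_nonneg (g : A -> R) l : (forall x, In x l -> 0 <= g x) -> 0 <= prodR g l.
Proof.
  induction l; simpl; intros H; [lra|].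
  assert (0 <= g a) by auto. assert (0 <= prodR g l) by auto. nra.
Qed.

Lemma prodR_le1 (g : A -> R) l : (forall x, In x l -> 0 <= g x <= 1) -> prodR g l <= 1.
Proof.
  induction l; simpl; intros H; [lra|].
  assert (0 <= g a <= 1) by auto. assert (prodR g l <= 1) by auto.
  assert (0 <= prodR g l) by (apply prodR_nonneg; intros; apply H; auto). nra.
Qed.

Lemma prodR_const (g : A -> R) c l : (forall x, In x l -> g x = c) -> prodR g l = c ^ length l.
Proof. induction l; simpl; intros H; auto. rewrite H, IHl; auto. Qed.

Lemma prodR_filter (g : A -> R) (p : A -> bool) l :
  prodR g l = prodR g (filter p l) * prodR g (filter (fun x => negb (p x)) l).
Proof. induction l; simpl; [lra|]. destruct (p a); simpl; rewrite IHl; lra. Qed.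

End ListSums.

Lemma sumR_map {A B} (g : B -> R) (f : A -> B) l : sumR g (map f l) = sumR (fun x => g (f x)) l.
Proof. induction l; simpl; auto. rewrite IHl; auto. Qed.

Lemma prodR_map {A B} (g : B -> R) (f : A -> B) l : prodR g (map f l) = prodR (fun x => g (f x)) l.
Proof. induction l; simpl; auto. rewrite IHl; auto. Qed.

Lemma sumR_flat_map {A B} (g : B -> R) (F : A -> list B) l :
  sumR g (flat_map F l) = sumR (fun x => sumR g (F x)) l.
Proof. induction l; simpl; auto. rewrite sumR_app, IHl; auto. Qed.

Lemma sumR_list_prod {A B} (F : A * B -> R) l1 l2 :
  sumR F (list_prod l1 l2) = sumR (fun a => sumR (fun b => F (a, b)) l2) l1.
Proof. induction l1; simpl; auto. rewrite sumR_app, IHl1, sumR_map; auto. Qed.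

Lemma sumR_seq_shift (f : nat -> R) m0 m n : (forall j, 0 <= f j) -> (m0 <= m)%nat ->
  sumR f (seq m n) <= sumR f (seq m0 ((m - m0) + n)).
Proof.
  intros Hf Hm. rewrite seq_app, sumR_app. replace (m0 + (m - m0))%nat with m by lia.
  assert (0 <= sumR f (seq m0 (m - m0))) by (apply sumR_nonneg; auto). lra.
Qed.

Lemma lam_dk_prodR lam k : lam_dk lam k = prodR lam k.
Proof. unfold lam_dk. induction k; simpl; auto. rewrite IHk; auto. Qed.

(** * Counting by weights *)

Lemma NoDup_map_on {A B} (f : A -> B) l :
  (forall x y, In x l -> In y l -> f x = f y -> x = y) -> NoDup l -> NoDup (map f l).
Proof.
  induction l as [|a l IH]; simpl; intros Hinj Hn; constructor; inversion Hn; subst.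
  - intros Hin. apply in_map_iff in Hin. destruct Hin as [y [Hy Hyl]].
    assert (y = a) by (apply Hinj; auto). subst; contradiction.
  - apply IH; auto.
Qed.

Lemma NoDup_remove_elt {A} (dec : forall x y : A, {x = y} + {x <> y}) e ls :
  NoDup ls -> NoDup (remove dec e ls).
Proof.
  induction ls as [|x r IH]; simpl; intros Hn; auto. inversion Hn; subst.
  destruct (dec e x); auto. constructor; auto. intros Hin. apply in_remove in Hin. tauto.
Qed.

Lemma sumR_remove {A} (dec : forall x y : A, {x = y} + {x <> y}) (g : A -> R) e ls :
  NoDup ls -> In e ls -> sumR g ls = g e + sumR g (remove dec e ls).
Proof.
  induction ls as [|x r IH]; simpl; intros Hn Hi; [contradiction|].
  inversion Hn; subst. destruct (dec e x) as [->|Hne].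
  - rewrite notin_remove by auto. lra.
  - destruct Hi as [->|Hi]; [congruence|]. simpl. rewrite IH by auto. lra.
Qed.

Lemma sumR_incl_le {A} (dec : forall x y : A, {x = y} + {x <> y}) (g : A -> R) :
  (forall x, 0 <= g x) -> forall en ls, NoDup ls -> incl ls en -> sumR g ls <= sumR g en.
Proof.
  intros Hg en. induction en as [|e en IH]; intros ls Hn Hi.
  - destruct ls as [|x ls]; simpl; [lra|]. exfalso. apply (Hi x); simpl; auto.
  - simpl. destruct (in_dec dec e ls) as [Hin|Hnin].
    + rewrite (sumR_remove dec g e ls) by auto.
      assert (sumR g (remove dec e ls) <= sumR g en); [|lra].
      apply IH; [apply NoDup_remove_elt; auto|].
      intros y Hy. apply in_remove in Hy. destruct Hy as [Hy Hne].
      destruct (Hi y Hy) as [->|?]; [congruence|auto].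
    + assert (sumR g ls <= sumR g en); [|specialize (Hg e); lra].
      apply IH; auto. intros y Hy. destruct (Hi y Hy) as [->|?]; [contradiction|auto].
Qed.

Lemma card_le_by_weights {T} (A : T -> Prop) (h : T -> list nat) (g : list nat -> R) en :
  (forall z, 0 <= g z) ->
  (forall x y, A x -> A y -> h x = h y -> x = y) ->
  (forall x, A x -> In (h x) en) -> (forall x, A x -> 1 <= g (h x)) ->
  card_le A (sumR g en).
Proof.
  intros Hg Hinj Hin Hw l Hn Hl.
  rewrite <- (length_map h). apply Rle_trans with (sumR g (map h l)).
  - apply len_le_sumR. intros z Hz. apply in_map_iff in Hz. destruct Hz as [x [<- Hx]]; auto.
  - apply (sumR_incl_le (list_eq_dec Nat.eq_dec)); [exact Hg| |].
    + apply NoDup_map_on; [|exact Hn]. intros x y Hx Hy; apply Hinj; auto.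
    + intros z Hz. apply in_map_iff in Hz. destruct Hz as [x [<- Hx]]; auto.
Qed.

Lemma card_le_mono {T} (A : T -> Prop) N1 N2 : card_le A N1 -> N1 <= N2 -> card_le A N2.
Proof. intros H Hle l Hn Hl. specialize (H l Hn Hl). lra. Qed.

Fixpoint words (V : list nat) (r : nat) : list (list nat) :=
  match r with
  | O => [[]]
  | S r' => flat_map (fun x => map (cons x) (words V r')) V
  end.

Lemma In_words V r w : length w = r -> (forall x, In x w -> In x V) -> In w (words V r).
Proof.
  revert w; induction r as [|r IH]; intros w Hl Hw; destruct w as [|x w]; simpl in *; try lia; auto.
  apply in_flat_map. exists x. split; auto. apply in_map. apply IH; auto.
Qed.

Lemma In_words_inv V r w : In w (words V r) -> length w = r /\ (forall x, In x w -> In x V).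
Proof.
  revert w; induction r as [|r IH]; intros w H; simpl in H.
  - destruct H as [<-|[]]; simpl; split; auto; intros _ [].
  - apply in_flat_map in H. destruct H as [x [Hx H]]. apply in_map_iff in H.
    destruct H as [w' [<- Hw']]. apply IH in Hw'. destruct Hw'. simpl; split; auto.
    intros y [<-|Hy]; auto.
Qed.

Lemma length_words V r : length (words V r) = (length V ^ r)%nat.
Proof.
  induction r as [|r IH]; [reflexivity|]. cbn [words Nat.pow]. rewrite <- IH.
  generalize (words V r) as E. intros E. clear IH.
  induction V as [|a V IHV]; simpl; auto. rewrite length_app, length_map, IHV. lia.
Qed.

Lemma NoDup_words V r : NoDup V -> NoDup (words V r).
Proof.
  intros HV. induction r as [|r IH]; [simpl; constructor; [intros []|constructor]|].
  cbn [words]. generalize (words V r) IH. intros E HE. clear IH.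
  induction V as [|a V IHV]; simpl; [constructor|]. inversion HV; subst.
  apply NoDup_app.
  - apply NoDup_map_on; auto. intros x y _ _ H; injection H; auto.
  - apply IHV; auto.
  - intros w Hw1 Hw2. apply in_map_iff in Hw1. destruct Hw1 as [w1 [<- _]].
    apply in_flat_map in Hw2. destruct Hw2 as [x [Hx Hw2]]. apply in_map_iff in Hw2.
    destruct Hw2 as [w2 [Heq _]]. injection Heq; intros; subst. contradiction.
Qed.

Lemma sumR_prodR_words (f : nat -> R) V r : sumR (prodR f) (words V r) = (sumR f V) ^ r.
Proof.
  induction r as [|r IH]; [simpl; lra|]. simpl words. rewrite sumR_flat_map.
  transitivity (sumR (fun x => (sumR f V)^r * f x) V).
  - apply sumR_ext. intros x _. rewrite sumR_map. simpl prodR.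
    rewrite sumR_scal, IH. lra.
  - rewrite sumR_scal. simpl. lra.
Qed.

(** * Nondecreasing words and their weight

    [sorted_words M a m] lists the nondecreasing words of length at most [a] with letters
    in [[m, M]]. They encode the values of a multi-index on the symmetric coordinates.
    The key estimate [sorted_weight_bound]: if [f <= 1] on [[1, m0]] and the tail of [f]
    beyond [m0] sums to at most [1/2], the total product weight of these words grows only
    polynomially in [a], with degree [m0 + 1 - m]. *)

Fixpoint sorted_words (M : nat) (a : nat) (m : nat) : list (list nat) :=
  match a with
  | O => [[]]
  | S a' => [] :: flat_map (fun x => map (cons x) (sorted_words M a' x)) (seq m (S M - m))
  end.

Lemma In_sorted_words M a m w : StronglySorted le w -> (forall x, In x w -> (m <= x <= M)%nat) ->
  (length w <= a)%nat -> In w (sorted_words M a m).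
Proof.
  revert m w; induction a as [|a IH]; intros m w Hs Hw Hl; destruct w as [|x w];
    cbn [sorted_words length In] in *; auto; try lia.
  right. apply in_flat_map. exists x. split.
  - apply in_seq. assert (m <= x <= M)%nat by (apply Hw; left; auto). lia.
  - apply in_map. inversion Hs; subst. apply IH; auto; [|lia].
    intros y Hy. rewrite Forall_forall in *. split; [auto|]. apply Hw; auto.
Qed.

Definition sorted_weight (f : nat -> R) M a m : R := sumR (prodR f) (sorted_words M a m).

Lemma sorted_weight_nonneg f M a m : (forall j, 0 <= f j) -> 0 <= sorted_weight f M a m.
Proof. intros Hf. apply sumR_nonneg; intros; apply prodR_nonneg; auto. Qed.

Lemma sorted_weight_S f M a m :
  sorted_weight f M (S a) m = 1 + sumR (fun x => f x * sorted_weight f M a x) (seq m (S M - m)).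
Proof.
  unfold sorted_weight. cbn [sorted_words].
  change (sumR (prodR f) ([] :: ?l)) with (prodR f [] + sumR (prodR f) l).
  rewrite sumR_flat_map. simpl prodR. f_equal.
  apply sumR_ext. intros x _. rewrite sumR_map. simpl prodR. apply sumR_scal.
Qed.

(** Either the word starts with the letter [m], or all its letters are [> m]. *)
Lemma sorted_weight_shift f M a m : (m <= M)%nat ->
  sorted_weight f M (S a) m = f m * sorted_weight f M a m + sorted_weight f M (S a) (S m).
Proof.
  intros HmM. rewrite !sorted_weight_S. replace (S M - m)%nat with (S (S M - S m)) by lia.
  simpl seq. simpl sumR. lra.
Qed.

Lemma sorted_weight_beyond f M a m : (M < m)%nat -> sorted_weight f M (S a) m = 1.
Proof. intros HmM. rewrite sorted_weight_S. replace (S M - m)%nat with 0%nat by lia. simpl. lra. Qed.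

Section SortedWeightBound.
Variables (f : nat -> R) (M m0 : nat).
Hypothesis f_nonneg : forall j, 0 <= f j.
Hypothesis f_le1 : forall j, (1 <= j <= m0)%nat -> f j <= 1.
Hypothesis f_tail : forall n, sumR f (seq (S m0) n) <= 1/2.

(** Words made of letters beyond [m0] have weight at most [2] (geometric series). *)
Lemma sorted_weight_tail_step a :
  (forall x, (m0 < x)%nat -> sorted_weight f M a x <= 2) ->
  forall m, (m0 < m)%nat -> sorted_weight f M (S a) m <= 2.
Proof.
  intros IH m Hm. rewrite sorted_weight_S.
  assert (Hle : sumR (fun x => f x * sorted_weight f M a x) (seq m (S M - m))
             <= sumR (fun x => 2 * f x) (seq m (S M - m))).
  { apply sumR_le. intros x Hx. apply in_seq in Hx.
    specialize (IH x ltac:(lia)). specialize (f_nonneg x). nra. }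
  rewrite sumR_scal in Hle.
  assert (sumR f (seq m (S M - m)) <= 1/2).
  { eapply Rle_trans; [apply (sumR_seq_shift f (S m0)); auto|apply f_tail]. }
  lra.
Qed.

Lemma sorted_weight_bound :
  forall a m, (1 <= m)%nat -> sorted_weight f M a m <= 2 * (INR a + 1) ^ (S m0 - m).
Proof.
  induction a as [|a IH]; intros m Hm.
  { unfold sorted_weight. simpl. rewrite Rplus_0_l, pow1. lra. }
  (* descending induction on [m], from the letters beyond [m0] downwards *)
  remember (S m0 - m)%nat as e eqn:He. revert m Hm He.
  induction e as [|e IHe]; intros m Hm He.
  - simpl. rewrite Rmult_1_r. apply sorted_weight_tail_step; [|lia].
    intros x Hx. specialize (IH x ltac:(lia)). replace (S m0 - x)%nat with 0%nat in IH by lia.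
    simpl in IH. lra.
  - rewrite S_INR. pose proof (pos_INR a) as Ha.
    destruct (Compare_dec.le_lt_dec m M) as [HmM|HmM].
    2:{ rewrite sorted_weight_beyond by auto.
        assert (1 <= (INR a + 1 + 1) ^ S e) by (apply pow_R1_Rle; lra). lra. }
    rewrite sorted_weight_shift by auto.
    specialize (IH m Hm). rewrite <- He in IH.
    specialize (IHe (S m) ltac:(lia) ltac:(lia)). rewrite S_INR in IHe.
    assert (f m <= 1) by (apply f_le1; lia). pose proof (f_nonneg m).
    pose proof (sorted_weight_nonneg f M a m f_nonneg).
    assert (Hp : (INR a + 1) ^ S e <= (INR a + 1) * (INR a + 1 + 1) ^ e).
    { simpl. apply Rmult_le_compat_l; [lra|]. apply pow_incr. lra. }
    assert (f m * sorted_weight f M a m <= 2 * (INR a + 1) ^ S e).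
    { apply Rle_trans with (1 * sorted_weight f M a m); [apply Rmult_le_compat_r|]; lra. }
    simpl. nra.
Qed.

End SortedWeightBound.

Lemma ln_le x y : 0 < x -> x <= y -> ln x <= ln y.
Proof. intros Hx [H| ->]; [left; apply ln_increasing; auto|lra]. Qed.

Lemma Rpower_gt0 x y : 0 < Rpower x y.
Proof. unfold Rpower; apply exp_pos. Qed.

Lemma Rpower_base1 y : Rpower 1 y = 1.
Proof. unfold Rpower. rewrite ln_1, Rmult_0_r, exp_0. auto. Qed.

Lemma pow_le_1 x n : 0 <= x <= 1 -> x ^ n <= 1.
Proof. intros Hx. induction n; simpl; [lra|]. assert (0 <= x ^ n) by (apply pow_le; lra). nra. Qed.

Lemma pow_antimono x n m : 0 < x <= 1 -> (n <= m)%nat -> x ^ m <= x ^ n.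
Proof.
  intros Hx Hnm. replace m with (n + (m - n))%nat by lia. rewrite pow_add.
  assert (x ^ (m - n) <= 1) by (apply pow_le_1; lra).
  assert (0 <= x ^ n) by (apply pow_le; lra). nra.
Qed.

Lemma Rpower_half_sq y : 0 < y -> Rpower y (1/2) ^ 2 = y.
Proof.
  intros Hy. rewrite <- Rpower_pow by apply Rpower_gt0. rewrite Rpower_mult. simpl INR.
  replace (1 / 2 * (1 + 1)) with 1 by lra. apply Rpower_1; auto.
Qed.

Lemma rpow_pos x t : 0 < x -> rpow x t = Rpower x t.
Proof. intros Hx. unfold rpow. destruct (Req_dec_T x 0); [lra|auto]. Qed.

Lemma rpow_0 t : rpow 0 t = 0.
Proof. unfold rpow. destruct (Req_dec_T 0 0); [auto|lra]. Qed.

Lemma rpow_nonneg x t : 0 <= rpow x t.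
Proof. unfold rpow. destruct (Req_dec_T x 0); [lra|left; apply Rpower_gt0]. Qed.

Lemma rpow_gt0 x t : 0 < x -> 0 < rpow x t.
Proof. intros; rewrite rpow_pos by auto. apply Rpower_gt0. Qed.

Lemma rpow_1 t : rpow 1 t = 1.
Proof. rewrite rpow_pos by lra. apply Rpower_base1. Qed.

Lemma rpow_mult x y t : 0 <= x -> 0 <= y -> rpow (x * y) t = rpow x t * rpow y t.
Proof.
  intros Hx Hy. destruct Hx as [Hx| <-]; [|rewrite Rmult_0_l, !rpow_0; lra].
  destruct Hy as [Hy| <-]; [|rewrite Rmult_0_r, !rpow_0; lra].
  rewrite !rpow_pos by nra. symmetry. apply Rpower_mult_distr; auto.
Qed.

Lemma rpow_plus x a b : 0 <= x -> rpow x (a + b) = rpow x a * rpow x b.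
Proof. intros [Hx| <-]; [|rewrite !rpow_0; lra]. rewrite !rpow_pos by auto. apply Rpower_plus. Qed.

Lemma rpow_le x y t : 0 <= x <= y -> 0 < t -> rpow x t <= rpow y t.
Proof.
  intros [Hx Hxy] Ht. destruct Hx as [Hx| <-]; [|rewrite rpow_0; apply rpow_nonneg].
  rewrite !rpow_pos by lra. apply Rle_Rpower_l; lra.
Qed.

Lemma rpow_le1 x t : 0 <= x <= 1 -> 0 < t -> rpow x t <= 1.
Proof. intros. rewrite <- (rpow_1 t). apply rpow_le; auto. Qed.

Lemma prodR_rpow (g : nat -> R) t z : (forall x, In x z -> 0 <= g x) ->
  prodR (fun j => rpow (g j) t) z = rpow (prodR g z) t.
Proof.
  induction z as [|a z IH]; intros H; simpl; [rewrite rpow_1; auto|].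
  rewrite rpow_mult, IH; auto; [intros; apply H; simpl; auto|apply H; simpl; auto|].
  apply prodR_nonneg. intros; apply H; simpl; auto.
Qed.

Lemma inv_rpow_eps eps tau : 0 < eps -> / rpow (eps ^ 2) tau = Rpower eps (- (2 * tau)).
Proof.
  intros He. rewrite rpow_pos by nra. rewrite Rpower_Ropp. f_equal.
  rewrite <- Rpower_pow by auto. rewrite Rpower_mult. simpl INR. f_equal; lra.
Qed.

Lemma sumR_seq_sum_f_R0 (G : nat -> R) N : sumR G (seq 1 (S N)) = sum_f_R0 (fun n => G (S n)) N.
Proof.
  induction N as [|N IH]; [simpl; lra|].
  rewrite seq_S, sumR_app, IH. simpl. lra.
Qed.

Section Eigenvalues.
Variable lam : nat -> R.
Hypothesis Hlam : admissible_eigs lam.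

Lemma lam_nonneg j : (1 <= j)%nat -> 0 <= lam j.
Proof. destruct Hlam as [H _]; auto. Qed.

Lemma lam_mono i j : (1 <= i <= j)%nat -> lam j <= lam i.
Proof.
  destruct Hlam as [_ [H1 _]]. intros [Hi Hij]. induction Hij; [lra|].
  apply Rle_trans with (lam m); auto. apply H1; lia.
Qed.

Lemma lam_le1 j : lam 1%nat <= 1 -> (1 <= j)%nat -> 0 <= lam j <= 1.
Proof. intros H1 Hj. split; [apply lam_nonneg; auto|]. eapply Rle_trans; [apply lam_mono|]; auto; lia. Qed.

Lemma in_ell_partial_sums tau : in_ell lam tau ->
  exists s, 0 <= s /\ forall n, sumR (fun j => rpow (lam j) tau) (seq 1 n) <= s.
Proof.
  intros [s Hs]. set (F := fun n => rpow (lam (S n)) tau).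
  assert (Hg : Un_growing (sum_f_R0 F)).
  { intros n. simpl. assert (0 <= F (S n)) by apply rpow_nonneg. lra. }
  assert (Hb : forall N, sum_f_R0 F N <= s) by (intros; apply growing_ineq; auto).
  assert (Hs0 : 0 <= s).
  { specialize (Hb 0%nat). simpl in Hb. assert (0 <= F 0%nat) by apply rpow_nonneg. lra. }
  exists s. split; auto. intros [|n]; [simpl; lra|].
  rewrite sumR_seq_sum_f_R0. apply Hb.
Qed.

(** If [lam] is in some [l_tau0] and [lam (m0+1) < 1], then raising the exponent makes the tail
    [sum_{j > m0} lam_j^tau] at most [1/2]: the extra factor [lam_j^t <= theta^t] is uniformly small. *)
Lemma small_tail_exponent m0 tau0 : 0 < tau0 -> in_ell lam tau0 -> lam (S m0) < 1 ->
  exists tau, 0 < tau /\ forall n, sumR (fun j => rpow (lam j) tau) (seq (S m0) n) <= 1/2.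
Proof.
  intros Ht0 Hell Hlt. destruct (in_ell_partial_sums tau0 Hell) as [s [Hs0 Hs]].
  set (th := Rmax (lam (S m0)) (1/2)).
  assert (Hth : 1/2 <= th < 1) by (unfold th; split; [apply Rmax_r|apply Rmax_lub_lt; lra]).
  assert (Hlnth : ln th < 0) by (rewrite <- ln_1; apply ln_increasing; lra).
  assert (Hln2 : 0 < ln (2 * s + 2)) by (rewrite <- ln_1; apply ln_increasing; lra).
  set (t := ln (2 * s + 2) / (- ln th)).
  assert (Ht : 0 < t) by (unfold t; apply Rdiv_lt_0_compat; lra).
  assert (Hrt : rpow th t = / (2 * s + 2)).
  { rewrite rpow_pos by lra. unfold Rpower, t.
    replace (ln (2 * s + 2) / - ln th * ln th) with (- ln (2 * s + 2)) by (field; lra).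
    rewrite <- ln_Rinv by lra. apply exp_ln. apply Rinv_0_lt_compat; lra. }
  exists (tau0 + t). split; [lra|]. intros n.
  set (S0 := sumR (fun j => rpow (lam j) tau0) (seq (S m0) n)).
  assert (Hfactor : sumR (fun j => rpow (lam j) (tau0 + t)) (seq (S m0) n) <= rpow th t * S0).
  { unfold S0. rewrite <- sumR_scal. apply sumR_le. intros j Hj. apply in_seq in Hj.
    assert (0 <= lam j) by (apply lam_nonneg; lia).
    rewrite rpow_plus, Rmult_comm by auto. apply Rmult_le_compat_r; [apply rpow_nonneg|].
    apply rpow_le; auto. split; auto.
    apply Rle_trans with (lam (S m0)); [apply lam_mono; lia|apply Rmax_l]. }
  assert (HS0 : 0 <= S0 <= s).
  { split; [apply sumR_nonneg; intros; apply rpow_nonneg|].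
    eapply Rle_trans; [apply (sumR_seq_shift _ 1%nat); [intros; apply rpow_nonneg|lia]|apply Hs]. }
  rewrite Hrt in Hfactor. eapply Rle_trans; [exact Hfactor|].
  apply Rmult_le_reg_l with (2 * s + 2); [lra|].
  rewrite <- Rmult_assoc, Rinv_r by lra. lra.
Qed.

End Eigenvalues.

Definition sym_coords (I : nat -> nat -> bool) d := filter (fun i => I d i) (seq 1 d).
Definition free_coords (I : nat -> nat -> bool) d := filter (fun i => negb (I d i)) (seq 1 d).

Lemma card_I_sym I d : card_I I d = length (sym_coords I d).
Proof. reflexivity. Qed.

Lemma b_of_free I d : b_of I d = length (free_coords I d).
Proof.
  unfold b_of, card_I, free_coords. pose proof (filter_length (fun i => I d i) (seq 1 d)) as H.
  rewrite length_seq in H. lia.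
Qed.

Lemma card_I_le I d : (card_I I d <= d)%nat.
Proof. unfold card_I. rewrite <- (length_seq d 1) at 2. apply filter_length_le. Qed.

Lemma In_sym_coords I d l : In l (sym_coords I d) <-> (1 <= l <= d)%nat /\ I d l = true.
Proof. unfold sym_coords. rewrite filter_In, in_seq. split; intros [? ?]; split; auto; lia. Qed.

Lemma In_free_coords I d l : In l (free_coords I d) <-> (1 <= l <= d)%nat /\ I d l = false.
Proof.
  unfold free_coords. rewrite filter_In, in_seq.
  split; intros [? ?]; split; try lia; destruct (I d l); simpl in *; auto; congruence.
Qed.

Lemma I_range I : admissible_I I -> forall d i, I d i = true -> (1 <= i <= d)%nat.
Proof. intros [H _]; auto. Qed.

Lemma kth_map_seq (g : nat -> nat) d l : (1 <= l <= d)%nat -> kth (map g (seq 1 d)) l = g l.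
Proof.
  intros Hl. unfold kth.
  rewrite nth_indep with (d' := g 0%nat) by (rewrite length_map, length_seq; lia).
  rewrite map_nth, seq_nth by lia. f_equal; lia.
Qed.

Lemma multi_index_coords k : k = map (kth k) (seq 1 (length k)).
Proof.
  apply nth_ext with (d := 0%nat) (d' := 0%nat); [rewrite length_map, length_seq; auto|].
  intros n Hn.
  rewrite (nth_indep (map (kth k) (seq 1 (length k))) 0%nat (kth k 0%nat))
    by (rewrite length_map, length_seq; lia).
  rewrite map_nth, seq_nth by lia. unfold kth. f_equal. lia.
Qed.

Lemma kth_In k l : (1 <= l <= length k)%nat -> In (kth k l) k.
Proof. intros. unfold kth. apply nth_In. lia. Qed.

Lemma lam_dk_split lam I d k : length k = d ->
  lam_dk lam k = prodR lam (map (kth k) (free_coords I d)) * prodR lam (map (kth k) (sym_coords I d)).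
Proof.
  intros Hl. rewrite lam_dk_prodR, (multi_index_coords k) at 1. rewrite Hl, !prodR_map.
  rewrite (prodR_filter _ (fun i => I d i)). unfold free_coords, sym_coords. lra.
Qed.

Lemma lam_dk_map lam (g : nat -> nat) d :
  lam_dk lam (map g (seq 1 d)) = prodR (fun l => lam (g l)) (seq 1 d).
Proof. rewrite lam_dk_prodR, prodR_map. auto. Qed.

Lemma in_nabla_map I d (g : nat -> nat) : admissible_I I ->
  (forall l, (1 <= g l)%nat) ->
  (forall i j, I d i = true -> I d j = true -> (i < j)%nat -> (g i <= g j)%nat) ->
  in_nabla_sym I d (map g (seq 1 d)).
Proof.
  intros HI Hg1 Hg. split; [rewrite length_map, length_seq; auto|split].
  - intros x Hx. apply in_map_iff in Hx. destruct Hx as [l [<- _]]. auto.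
  - intros i j Hi Hj Hij. rewrite !kth_map_seq by (eapply I_range; eauto). auto.
Qed.

(** * Nondecreasing words of positive letters

    Such a word is determined by its length and its letters [>= 2]: the letters equal to [1]
    form its initial segment. This is why only the values [>= 2] on the symmetric
    coordinates need to be recorded. *)

Lemma StronglySorted_seq s n : StronglySorted lt (seq s n).
Proof.
  revert s; induction n; intros s; simpl; constructor; auto.
  apply Forall_forall. intros x Hx. apply in_seq in Hx. lia.
Qed.

Lemma StronglySorted_filter {A} (R : A -> A -> Prop) p l :
  StronglySorted R l -> StronglySorted R (filter p l).
Proof.
  induction l; simpl; intros H; auto. inversion H; subst.
  destruct (p a); auto. constructor; auto. rewrite Forall_forall in *.
  intros x Hx. apply filter_In in Hx. apply H3; tauto.
Qed.

Lemma StronglySorted_map (g : nat -> nat) P : StronglySorted lt P ->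
  (forall i j, In i P -> In j P -> (i < j)%nat -> (g i <= g j)%nat) -> StronglySorted le (map g P).
Proof.
  induction P as [|a P IH]; simpl; intros Hs Hg; constructor; inversion Hs; subst.
  - apply IH; auto.
  - rewrite Forall_forall in *. intros y Hy. apply in_map_iff in Hy. destruct Hy as [x [<- Hx]].
    apply Hg; auto.
Qed.

Lemma sorted_word_ones v : StronglySorted le v -> (forall x, In x v -> (1 <= x)%nat) ->
  v = repeat 1%nat (length v - length (filter (Nat.leb 2) v)) ++ filter (Nat.leb 2) v.
Proof.
  induction v as [|x r IH]; intros Hs Hv; auto. inversion Hs; subst.
  assert (1 <= x)%nat by (apply Hv; simpl; auto).
  cbn [filter length]. destruct (Nat.leb 2 x) eqn:Ex.
  - apply Nat.leb_le in Ex. rewrite forallb_filter_id.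
    + replace (S (length r) - length (x :: r))%nat with 0%nat by (simpl; lia). auto.
    + apply forallb_forall. intros y Hy. rewrite Forall_forall in H2.
      specialize (H2 y Hy). apply Nat.leb_le. lia.
  - apply Nat.leb_gt in Ex. assert (x = 1%nat) by lia. subst.
    pose proof (filter_length_le (Nat.leb 2) r).
    replace (S (length r) - length (filter (Nat.leb 2) r))%nat
      with (S (length r - length (filter (Nat.leb 2) r))) by lia.
    cbn [repeat app]. f_equal. apply IH; auto. intros; apply Hv; simpl; auto.
Qed.

Lemma sorted_word_eq v v' : StronglySorted le v -> (forall x, In x v -> (1 <= x)%nat) ->
  StronglySorted le v' -> (forall x, In x v' -> (1 <= x)%nat) ->
  length v = length v' -> filter (Nat.leb 2) v = filter (Nat.leb 2) v' -> v = v'.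
Proof.
  intros H1 H2 H3 H4 H5 H6. rewrite (sorted_word_ones v), (sorted_word_ones v'); auto.
  rewrite H5, H6. auto.
Qed.

(** * The key of a multi-index *)

Definition sym_values I d k := map (kth k) (sym_coords I d).
Definition free_values I d k := map (kth k) (free_coords I d).
Definition key I d k := free_values I d k ++ filter (Nat.leb 2) (sym_values I d k).

Lemma sym_values_sorted I d k : in_nabla_sym I d k -> StronglySorted le (sym_values I d k).
Proof.
  intros [_ [_ Hk]]. apply StronglySorted_map; [apply StronglySorted_filter, StronglySorted_seq|].
  intros i j Hi Hj Hij. apply In_sym_coords in Hi. apply In_sym_coords in Hj. apply Hk; tauto.
Qed.

Lemma values_In I d k x : length k = d ->
  In x (sym_values I d k) \/ In x (free_values I d k) -> In x k.
Proof.
  intros Hl [Hx|Hx]; apply in_map_iff in Hx; destruct Hx as [i [<- Hi]];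
    [apply In_sym_coords in Hi|apply In_free_coords in Hi]; apply kth_In; lia.
Qed.

Lemma app_inv_length {A} (a a' b b' : list A) :
  length a = length a' -> a ++ b = a' ++ b' -> a = a' /\ b = b'.
Proof.
  revert a'; induction a as [|x a IH]; intros [|y a'] Hl He; simpl in *; try lia; auto.
  injection He; intros. injection Hl; intros. destruct (IH a' H1 H); subst; auto.
Qed.

Lemma key_injective I d k k' : in_nabla_sym I d k -> in_nabla_sym I d k' ->
  key I d k = key I d k' -> k = k'.
Proof.
  intros Hk Hk' Heq. pose proof Hk as [Hl [Hpos _]]. pose proof Hk' as [Hl' [Hpos' _]].
  apply app_inv_length in Heq; [|unfold free_values; rewrite !length_map; auto].
  destruct Heq as [Hfree Hsym].
  assert (Hsv : sym_values I d k = sym_values I d k').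
  { apply sorted_word_eq; auto using sym_values_sorted.
    - intros x Hx. apply Hpos, (values_In I d); auto.
    - intros x Hx. apply Hpos', (values_In I d); auto.
    - unfold sym_values. rewrite !length_map; auto. }
  apply nth_ext with (d := 0%nat) (d' := 0%nat); [lia|].
  intros n Hn. assert (Hkth : forall k0, nth n k0 0%nat = kth k0 (S n)) by (intros; unfold kth; f_equal; lia).
  rewrite !Hkth.
  destruct (I d (S n)) eqn:EI.
  - apply (ext_in_map Hsv). apply In_sym_coords. split; auto; lia.
  - apply (ext_in_map Hfree). apply In_free_coords. split; auto; lia.
Qed.

Definition keys I d M : list (list nat) :=
  map (fun p => fst p ++ snd p)
    (list_prod (words (seq 1 M) (b_of I d)) (sorted_words M (card_I I d) 2)).

Lemma key_in_keys I d M k : in_nabla_sym I d k -> (forall x, In x k -> (x <= M)%nat) ->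
  In (key I d k) (keys I d M).
Proof.
  intros Hk HM. pose proof Hk as [Hl [Hpos _]].
  unfold key, keys. apply in_map_iff.
  exists (free_values I d k, filter (Nat.leb 2) (sym_values I d k)). split; auto.
  apply in_prod.
  - apply In_words; [unfold free_values; rewrite length_map, b_of_free; auto|].
    intros x Hx. assert (In x k) by (apply (values_In I d); auto). apply in_seq.
    specialize (Hpos x H). specialize (HM x H). lia.
  - apply In_sorted_words.
    + apply StronglySorted_filter, sym_values_sorted; auto.
    + intros x Hx. apply filter_In in Hx. destruct Hx as [Hx Hx2]. apply Nat.leb_le in Hx2.
      split; auto. apply HM, (values_In I d); auto.
    + rewrite card_I_sym. eapply Nat.le_trans; [apply filter_length_le|].
      unfold sym_values. rewrite length_map; auto.
Qed.

(** Dropping the symmetric values equal to [1] can only increase the product, as [lambda_1 <= 1]. *)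
Lemma lam_dk_le_key lam I d k : admissible_eigs lam -> lam 1%nat <= 1 -> in_nabla_sym I d k ->
  lam_dk lam k <= prodR lam (key I d k).
Proof.
  intros Hlam Hl1 Hk. pose proof Hk as [Hl [Hpos _]].
  assert (Hv : forall x, In x k -> 0 <= lam x <= 1) by (intros; apply lam_le1; auto).
  assert (Hsv : forall x, In x (sym_values I d k) -> 0 <= lam x <= 1)
    by (intros; apply Hv, (values_In I d); auto).
  rewrite (lam_dk_split lam I d k Hl). unfold key. rewrite prodR_app.
  fold (free_values I d k) (sym_values I d k).
  rewrite (prodR_filter lam (Nat.leb 2) (sym_values I d k)).
  set (u := prodR lam (free_values I d k)).
  set (v2 := prodR lam (filter (Nat.leb 2) (sym_values I d k))).
  set (v1 := prodR lam (filter (fun x => negb (Nat.leb 2 x)) (sym_values I d k))).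
  assert (0 <= u)
    by (apply prodR_nonneg; intros; apply Hv, (values_In I d); auto).
  assert (0 <= v2) by (apply prodR_nonneg; intros x Hx; apply filter_In in Hx; apply Hsv; tauto).
  assert (0 <= v1 <= 1).
  { split; [apply prodR_nonneg|apply prodR_le1]; intros x Hx; apply filter_In in Hx; apply Hsv; tauto. }
  assert (0 <= u * v2) by nra. nra.
Qed.

Lemma keys_weight (f : nat -> R) I d M :
  sumR (prodR f) (keys I d M) = (sumR f (seq 1 M)) ^ (b_of I d) * sorted_weight f M (card_I I d) 2.
Proof.
  unfold keys. rewrite sumR_map, sumR_list_prod, <- sumR_prodR_words.
  rewrite (Rmult_comm _ (sorted_weight _ _ _ _)), <- (sumR_scal (prodR f)).
  apply sumR_ext. intros u _. unfold sorted_weight. rewrite Rmult_comm, <- sumR_scal.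
  apply sumR_ext. intros w _. simpl. rewrite prodR_app. lra.
Qed.

(** * Upper bound on the information complexity *)

Section UpperBound.
Variables (lam : nat -> R) (I : nat -> nat -> bool) (m0 : nat) (tau : R).
Hypothesis Hlam : admissible_eigs lam.
Hypothesis Hl1 : lam 1%nat <= 1.
Hypothesis Htau : 0 < tau.
Hypothesis Htail : forall n, sumR (fun j => rpow (lam j) tau) (seq (S m0) n) <= 1/2.

Let f j := rpow (lam j) tau.

Lemma f_le1 j : (1 <= j <= m0)%nat -> f j <= 1.
Proof. intros Hj. apply rpow_le1; auto. apply lam_le1; auto; lia. Qed.

Lemma f_sum_le M : sumR f (seq 1 M) <= INR m0 + 1.
Proof.
  apply Rle_trans with (sumR f (seq 1 (m0 + M))).
  { rewrite (Nat.add_comm m0 M), seq_app, sumR_app.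
    assert (0 <= sumR f (seq (1 + M) m0)) by (apply sumR_nonneg; intros; apply rpow_nonneg). lra. }
  rewrite seq_app, sumR_app. replace (1 + m0)%nat with (S m0) by lia.
  assert (sumR f (seq 1 m0) <= 1 * INR (length (seq 1 m0))).
  { apply sumR_le_len. intros x Hx. apply in_seq in Hx. apply f_le1. lia. }
  rewrite length_seq in H. specialize (Htail M). fold f in Htail. lra.
Qed.

Lemma keys_weight_le d M :
  sumR (prodR f) (keys I d M) <= 2 * (INR m0 + 1) ^ (b_of I d) * (INR (card_I I d) + 1) ^ (m0 - 1).
Proof.
  rewrite keys_weight.
  assert (Hf0 : forall j, 0 <= f j) by (intros; apply rpow_nonneg).
  assert (HT : sorted_weight f M (card_I I d) 2 <= 2 * (INR (card_I I d) + 1) ^ (m0 - 1)).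
  { replace (m0 - 1)%nat with (S m0 - 2)%nat by lia.
    apply sorted_weight_bound; auto; exact f_le1. }
  pose proof (sorted_weight_nonneg f M (card_I I d) 2 Hf0).
  pose proof (f_sum_le M). assert (0 <= sumR f (seq 1 M)) by (apply sumR_nonneg; auto).
  assert (sumR f (seq 1 M) ^ b_of I d <= (INR m0 + 1) ^ b_of I d) by (apply pow_incr; lra).
  assert (0 <= sumR f (seq 1 M) ^ b_of I d) by (apply pow_le; lra).
  nra.
Qed.

Lemma info_compl_upper_bound d eps : 0 < eps ->
  info_compl_le lam I eps d
    (2 * (INR m0 + 1) ^ (b_of I d) * (INR (card_I I d) + 1) ^ (m0 - 1) / rpow (eps ^ 2) tau).
Proof.
  intros Heps l Hn Hl.
  set (M := list_max (concat l)).
  assert (HM : forall k x, In k l -> In x k -> (x <= M)%nat).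
  { intros k x Hk Hx. assert (Hc : In x (concat l)) by (apply in_concat; eauto).
    pose proof (list_max_le (concat l) M) as [H _]. specialize (H (Nat.le_refl _)).
    rewrite Forall_forall in H. auto. }
  set (E := rpow (eps ^ 2) tau). assert (HE : 0 < E) by (apply rpow_gt0; nra).
  set (A := fun k => (in_nabla_sym I d k /\ lam_dk lam k > eps ^ 2) /\ forall x, In x k -> (x <= M)%nat).
  assert (Hcard : card_le A (sumR (fun z => prodR f z / E) (keys I d M))).
  { apply card_le_by_weights with (h := key I d).
    - intros z. apply Rmult_le_pos; [apply prodR_nonneg; intros; apply rpow_nonneg|].
      left; apply Rinv_0_lt_compat; auto.
    - intros k k' [[Hk _] _] [[Hk' _] _]. apply key_injective; auto.
    - intros k [[Hk _] HkM]. apply key_in_keys; auto.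
    - intros k [[Hk Hbig] _]. pose proof Hk as [_ [Hpos _]].
      assert (Hkey : forall x, In x (key I d k) -> (1 <= x)%nat).
      { intros x Hx. apply Hpos. unfold key in Hx. apply in_app_iff in Hx.
        destruct Hx as [Hx|Hx]; [|apply filter_In in Hx; destruct Hx as [Hx _]];
          apply (values_In I d); try tauto; apply Hk. }
      unfold f. rewrite prodR_rpow by (intros; apply lam_nonneg; auto).
      apply Rmult_le_reg_r with E; auto. unfold Rdiv. rewrite Rmult_assoc, Rinv_l by lra.
      rewrite Rmult_1_r, Rmult_1_l. unfold E. apply rpow_le; auto. split; [nra|].
      left. apply Rlt_le_trans with (lam_dk lam k); [lra|]. apply lam_dk_le_key; auto. }
  eapply Rle_trans; [apply (Hcard l Hn); intros k Hk; split; eauto|].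
  replace (sumR (fun z => prodR f z / E) (keys I d M)) with (/ E * sumR (prodR f) (keys I d M))
    by (rewrite <- sumR_scal; apply sumR_ext; intros; unfold Rdiv; lra).
  unfold Rdiv. rewrite (Rmult_comm _ (/ E)).
  apply Rmult_le_compat_l; [left; apply Rinv_0_lt_compat; auto|]. apply keys_weight_le.
Qed.

End UpperBound.

Lemma SPT_implies_PT lam I : strongly_poly_tractable lam I -> poly_tractable lam I.
Proof.
  intros [C [p [HC [Hp H]]]]. exists C, p, 0. repeat split; auto; try lra.
  intros d eps Hd He. eapply card_le_mono; [apply H; auto|].
  rewrite Rpower_O by (apply lt_0_INR; lia). lra.
Qed.

(** [lambda_1 < 1]: take [m0 = 0]; the bound no longer depends on [d]. *)
Lemma SPT_of_lam1_lt1 lam I : admissible_eigs lam -> lam 1%nat <= 1 ->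
  (exists tau, tau > 0 /\ in_ell lam tau) -> lam 1%nat < 1 -> strongly_poly_tractable lam I.
Proof.
  intros Hlam Hl1 [tau0 [Ht0 Hell]] Hlt.
  destruct (small_tail_exponent lam Hlam 0 tau0 Ht0 Hell Hlt) as [tau [Ht Hs]].
  exists 2, (2 * tau). repeat split; try lra. intros d eps _ [He0 _].
  eapply card_le_mono; [apply (info_compl_upper_bound lam I 0 tau); auto|].
  replace (0 - 1)%nat with 0%nat by lia. simpl INR. rewrite Rplus_0_l, pow1.
  unfold Rdiv. rewrite inv_rpow_eps by auto. simpl pow. lra.
Qed.

(** [lambda_2 < 1] and [b_d <= B]: take [m0 = 1]; the factor [2^{b_d}] stays bounded. *)
Lemma SPT_of_lam2_lt1 lam I : admissible_eigs lam -> lam 1%nat <= 1 ->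
  (exists tau, tau > 0 /\ in_ell lam tau) -> lam 2%nat < 1 -> b_bounded I ->
  strongly_poly_tractable lam I.
Proof.
  intros Hlam Hl1 [tau0 [Ht0 Hell]] Hlt [B HB].
  destruct (small_tail_exponent lam Hlam 1 tau0 Ht0 Hell Hlt) as [tau [Ht Hs]].
  exists (2 * Rpower 2 B), (2 * tau). pose proof (Rpower_gt0 2 B).
  repeat split; try lra. intros d eps Hd [He0 _].
  eapply card_le_mono; [apply (info_compl_upper_bound lam I 1 tau); auto|].
  replace (1 - 1)%nat with 0%nat by lia. simpl pow at 2. unfold Rdiv. rewrite inv_rpow_eps by auto.
  simpl INR. replace (1 + 1) with 2 by lra.
  assert (2 ^ b_of I d <= Rpower 2 B).
  { rewrite <- Rpower_pow by lra. apply Rle_Rpower; [lra|]. apply HB; auto. }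
  pose proof (Rpower_gt0 eps (- (2 * tau))). nra.
Qed.

Lemma b_of_1 I : admissible_I I -> b_of I 1 = 0%nat.
Proof. intros [_ [_ H]]. unfold b_of, card_I. simpl seq. cbn [filter]. rewrite H. reflexivity. Qed.

(** [b_d = O(ln d)] turns [X^{b_d}] into a power of [d]: [X^{c ln d} = d^{c ln X}]. *)
Lemma pow_b_log_bound I C0 X d : admissible_I I -> 1 <= X -> (1 <= d)%nat ->
  (forall d, (2 <= d)%nat -> INR (b_of I d) <= C0 * ln (INR d)) ->
  X ^ b_of I d <= X * Rpower (INR d) (Rmax C0 0 * ln X).
Proof.
  intros HI HX Hd HC0.
  assert (HlnX : 0 <= ln X) by (rewrite <- ln_1; apply ln_le; lra).
  pose proof (Rpower_gt0 (INR d) (Rmax C0 0 * ln X)).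
  destruct (Nat.eq_dec d 1) as [->|Hd2].
  { rewrite b_of_1 by auto. simpl. rewrite Rpower_base1. lra. }
  assert (Hb : INR (b_of I d) <= Rmax C0 0 * ln (INR d)).
  { eapply Rle_trans; [apply HC0; lia|]. apply Rmult_le_compat_r; [|apply Rmax_l].
    rewrite <- ln_1. apply ln_le; [lra|]. replace 1 with (INR 1) by auto. apply le_INR; lia. }
  rewrite <- Rpower_pow by lra.
  apply Rle_trans with (Rpower X (Rmax C0 0 * ln (INR d))); [apply Rle_Rpower; auto|].
  replace (Rpower X (Rmax C0 0 * ln (INR d))) with (Rpower (INR d) (Rmax C0 0 * ln X))
    by (unfold Rpower; f_equal; ring).
  nra.
Qed.

Lemma pow_card_bound I d N : (1 <= d)%nat ->
  (INR (card_I I d) + 1) ^ (N - 1) <= 2 ^ N * Rpower (INR d) (INR N).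
Proof.
  intros Hd. assert (Hd0 : 0 < INR d) by (apply lt_0_INR; lia).
  rewrite Rpower_pow, <- Rpow_mult_distr by auto.
  assert (INR (card_I I d) <= INR d) by (apply le_INR, card_I_le).
  assert (1 <= INR d) by (replace 1 with (INR 1) by auto; apply le_INR; lia).
  apply Rle_trans with ((2 * INR d) ^ (N - 1)); [apply pow_incr; pose proof (pos_INR (card_I I d)); lra|].
  apply Rle_pow; [lra|lia].
Qed.

Lemma eventually_lt1 lam : admissible_eigs lam -> exists N, lam (S N) < 1.
Proof.
  intros [_ [_ Hcv]]. destruct (Hcv (1/2) ltac:(lra)) as [N HN].
  specialize (HN (S N) ltac:(lia)). unfold Rdist in HN. rewrite Rminus_0_r in HN.
  exists N. apply Rabs_def2 in HN. lra.
Qed.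

(** [lambda_1 = 1] and [b_d = O(ln d)]: take [m0 = N] with [lambda_{N+1} < 1]. *)
Lemma PT_of_b_log lam I : admissible_eigs lam -> admissible_I I -> lam 1%nat <= 1 ->
  (exists tau, tau > 0 /\ in_ell lam tau) -> b_log I -> poly_tractable lam I.
Proof.
  intros Hlam HI Hl1 [tau0 [Ht0 Hell]] [C0 HC0].
  destruct (eventually_lt1 lam Hlam) as [N Hlt].
  destruct (small_tail_exponent lam Hlam N tau0 Ht0 Hell Hlt) as [tau [Ht Hs]].
  set (X := INR N + 1). assert (HX : 1 <= X) by (unfold X; pose proof (pos_INR N); lra).
  assert (HlnX : 0 <= ln X) by (rewrite <- ln_1; apply ln_le; lra).
  assert (HC1 : 0 <= Rmax C0 0) by apply Rmax_r.
  assert (0 < 2 ^ N) by (apply pow_lt; lra).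
  exists (2 * X * 2 ^ N), (2 * tau), (Rmax C0 0 * ln X + INR N).
  repeat split; try nra; [pose proof (pos_INR N); nra|].
  intros d eps Hd [He0 _].
  eapply card_le_mono; [apply (info_compl_upper_bound lam I N tau); auto|]. fold X.
  unfold Rdiv. rewrite inv_rpow_eps, Rpower_plus by auto.
  pose proof (pow_b_log_bound I C0 X d HI HX Hd HC0) as P1.
  pose proof (pow_card_bound I d N Hd) as P2.
  assert (0 <= (INR (card_I I d) + 1) ^ (N - 1))
    by (apply pow_le; pose proof (pos_INR (card_I I d)); lra).
  assert (0 <= X ^ b_of I d) by (apply pow_le; lra).
  pose proof (Rpower_gt0 eps (- (2 * tau))). pose proof (Rpower_gt0 (INR d) (Rmax C0 0 * ln X)).
  pose proof (Rpower_gt0 (INR d) (INR N)).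
  set (A1 := X ^ b_of I d) in *. set (A2 := (INR (card_I I d) + 1) ^ (N - 1)) in *.
  set (R1 := Rpower eps (- (2 * tau))) in *. set (R2 := Rpower (INR d) (Rmax C0 0 * ln X)) in *.
  set (R3 := Rpower (INR d) (INR N)) in *.
  apply Rle_trans with (2 * (X * R2) * (2 ^ N * R3) * R1); [|right; ring].
  apply Rmult_le_compat_r; [lra|]. apply Rmult_le_compat; nra.
Qed.

(** * Necessary conditions: summability of the eigenvalues

    For [d = 1] the indices [1, ..., m] all satisfy [lambda_j >= lambda_m > eps^2] with
    [eps^2 = lambda_m / 2], so a bound [n(eps, 1) <= K eps^{-p}] forces
    [lambda_m^p <= K^2 2^p / m^2], a summable majorant. *)

Lemma sum_inv_sq N : sum_f_R0 (fun n => / (INR (S n)) ^ 2) N <= 2 - / INR (S N).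
Proof.
  induction N as [|N IH]; [simpl; lra|].
  rewrite tech5, (S_INR (S N)), (S_INR N) in *. set (x := INR N) in *.
  assert (0 <= x) by apply pos_INR.
  (* telescoping: 1/(x+2)^2 <= 1/(x+1) - 1/(x+2) *)
  assert (/ (x + 1 + 1) ^ 2 <= / (x + 1) - / (x + 1 + 1)).
  { apply Rmult_le_reg_r with ((x + 1) * (x + 1 + 1) ^ 2); [nra|].
    replace (/ (x + 1 + 1) ^ 2 * ((x + 1) * (x + 1 + 1) ^ 2)) with (x + 1) by (field; lra).
    replace ((/ (x + 1) - / (x + 1 + 1)) * ((x + 1) * (x + 1 + 1) ^ 2)) with (x + 1 + 1)
      by (field; lra). lra. }
  lra.
Qed.

Lemma in_ell_of_inv_sq_bound lam p Q : 0 < Q ->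
  (forall m, (1 <= m)%nat -> rpow (lam m) p <= Q * / (INR m) ^ 2) -> in_ell lam p.
Proof.
  intros HQ Hb. set (F := fun n => rpow (lam (S n)) p).
  assert (Hg : Un_growing (sum_f_R0 F)).
  { intros n. simpl. assert (0 <= F (S n)) by apply rpow_nonneg. lra. }
  assert (Hub : has_ub (sum_f_R0 F)).
  { exists (2 * Q). intros x [N ->].
    apply Rle_trans with (sum_f_R0 (fun n => / (INR (S n)) ^ 2 * Q) N).
    - apply sum_Rle. intros n _. rewrite Rmult_comm. apply Hb. lia.
    - rewrite <- scal_sum. pose proof (sum_inv_sq N).
      assert (0 < / INR (S N)) by (apply Rinv_0_lt_compat, lt_0_INR; lia). nra. }
  destruct (growing_cv _ Hg Hub) as [s Hs]. exists s. exact Hs.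
Qed.

(** Testing [n(eps, d)] at [eps^2 = v / 2]: a family of distinct multi-indices of [nabla_d]
    with [lambda_{d,k} >= v] is counted. *)
Lemma count_family lam I d v (N : R -> R) ls : 0 < v <= 1 ->
  (forall eps, 0 < eps <= 1 -> info_compl_le lam I eps d (N eps)) -> NoDup ls ->
  (forall k, In k ls -> in_nabla_sym I d k /\ lam_dk lam k >= v) ->
  INR (length ls) <= N (Rpower (v / 2) (1/2)).
Proof.
  intros Hv H Hn Hls. set (eps := Rpower (v / 2) (1/2)).
  assert (He0 : 0 < eps) by apply Rpower_gt0.
  assert (He2 : eps ^ 2 = v / 2) by (apply Rpower_half_sq; lra).
  assert (He1 : eps <= 1) by nra.
  apply (H eps (conj He0 He1) ls Hn). intros k Hk. destruct (Hls k Hk). split; auto. lra.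
Qed.

Lemma count_dim1 lam I K p m : admissible_eigs lam -> admissible_I I -> lam 1%nat <= 1 ->
  (forall eps, 0 < eps <= 1 -> info_compl_le lam I eps 1 (K * Rpower eps (- p))) ->
  (1 <= m)%nat -> 0 < lam m -> INR m <= K * Rpower (lam m / 2) (- (p / 2)).
Proof.
  intros Hlam HI Hl1 H Hm Hpos.
  replace (Rpower (lam m / 2) (- (p / 2))) with (Rpower (Rpower (lam m / 2) (1/2)) (- p))
    by (rewrite Rpower_mult; f_equal; lra).
  replace (INR m) with (INR (length (map (fun j => [j]) (seq 1 m))))
    by (rewrite length_map, length_seq; auto).
  apply (count_family lam I 1 (lam m) (fun eps => K * Rpower eps (- p))); auto.
  - split; auto. apply lam_le1; auto.
  - apply NoDup_map_on; [intros x y _ _ E; injection E; auto|apply seq_NoDup].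
  - intros k Hk. apply in_map_iff in Hk. destruct Hk as [j [<- Hj]]. apply in_seq in Hj.
    split; [split; [auto|split]|].
    + intros x [<-|[]]. lia.
    + intros i i' Hi Hi' Hii'. apply (I_range I HI) in Hi. apply (I_range I HI) in Hi'. lia.
    + unfold lam_dk. cbn [map fold_right]. rewrite Rmult_1_r.
      apply Rle_ge, lam_mono; auto; lia.
Qed.

Lemma ell_of_count_dim1 lam I K p : admissible_eigs lam -> admissible_I I -> lam 1%nat <= 1 ->
  K > 0 ->
  (forall eps, 0 < eps <= 1 -> info_compl_le lam I eps 1 (K * Rpower eps (- p))) -> in_ell lam p.
Proof.
  intros Hlam HI Hl1 HK H. pose proof (Rpower_gt0 2 p).
  assert (HQ : 0 < K * K * Rpower 2 p) by (apply Rmult_lt_0_compat; nra).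
  apply (in_ell_of_inv_sq_bound lam p (K * K * Rpower 2 p)); [auto|].
  intros m Hm. assert (Hm0 : 0 < INR m) by (apply lt_0_INR; lia).
  assert (0 < / INR m ^ 2) by (apply Rinv_0_lt_compat; nra).
  destruct (lam_nonneg lam Hlam m Hm) as [Hpos| <-]; [|rewrite rpow_0; nra].
  pose proof (count_dim1 lam I K p m Hlam HI Hl1 H Hm Hpos) as Hc.
  set (Y := Rpower (lam m / 2) (p / 2)). assert (HY0 : 0 < Y) by apply Rpower_gt0.
  rewrite Rpower_Ropp in Hc. fold Y in Hc.
  assert (HmY : INR m * Y <= K).
  { apply Rmult_le_reg_r with (/ Y); [apply Rinv_0_lt_compat; auto|].
    rewrite Rmult_assoc, Rinv_r by lra. lra. }
  assert (HY2 : Y * Y = Rpower (lam m / 2) p) by (unfold Y; rewrite <- Rpower_plus; f_equal; lra).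
  assert (Hl : Rpower (lam m) p = Rpower 2 p * (Y * Y)).
  { rewrite HY2, Rpower_mult_distr by lra. f_equal. field. }
  rewrite rpow_pos, Hl by auto.
  apply Rmult_le_reg_r with (INR m ^ 2); [nra|].
  replace (K * K * Rpower 2 p * / INR m ^ 2 * INR m ^ 2) with (K * K * Rpower 2 p) by (field; lra).
  replace (Rpower 2 p * (Y * Y) * INR m ^ 2) with (Rpower 2 p * ((INR m * Y) * (INR m * Y))) by ring.
  rewrite (Rmult_comm (K * K)). apply Rmult_le_compat_l; [lra|]. assert (0 <= INR m * Y) by nra. nra.
Qed.

(** * Necessary conditions when [lambda_1 = 1] *)

(** If [lambda_1 = lambda_2 = 1], the [d + 1] nondecreasing multi-indices [(1,..,1,2,..,2)]
    all have [lambda_{d,k} = 1], so [n(1/2, d) >= d + 1] is unbounded in [d]. *)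
Definition step_index d t := map (fun l => if Nat.leb l t then 1%nat else 2%nat) (seq 1 d).

Lemma step_index_injective d t t' : (t <= d)%nat -> (t' <= d)%nat ->
  step_index d t = step_index d t' -> t = t'.
Proof.
  intros Ht Ht' E.
  assert (Hcross : forall u v, (u <= d)%nat -> (v <= d)%nat -> step_index d u = step_index d v -> (u < v)%nat -> False).
  { intros u v Hu Hv Euv Huv. assert (Hin : In v (seq 1 d)) by (apply in_seq; lia).
    pose proof (ext_in_map Euv v Hin) as Hx. cbn beta in Hx.
    replace (Nat.leb v u) with false in Hx by (symmetry; apply Nat.leb_gt; lia).
    replace (Nat.leb v v) with true in Hx by (symmetry; apply Nat.leb_le; lia). discriminate. }
  destruct (Nat.lt_total t t') as [Hlt|[Heq|Hlt]]; auto; exfalso; eauto.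
Qed.

Lemma not_SPT_of_lam2_eq1 lam I : admissible_I I -> lam 1%nat = 1 -> lam 2%nat = 1 ->
  ~ strongly_poly_tractable lam I.
Proof.
  intros HI H1 H2 [C [p [HC [Hp H]]]].
  destruct (INR_unbounded (C * Rpower (1/2) (- p))) as [d Hd].
  set (ls := map (step_index (S d)) (seq 0 (S (S d)))).
  assert (Hc : INR (length ls) <= C * Rpower (1/2) (- p)).
  { apply (H (S d) (1/2) ltac:(lia) ltac:(lra)).
    - apply NoDup_map_on; [|apply seq_NoDup].
      intros t t' Ht Ht'. apply in_seq in Ht. apply in_seq in Ht'. apply step_index_injective; lia.
    - intros k Hk. apply in_map_iff in Hk. destruct Hk as [t [<- _]]. split.
      + apply in_nabla_map; auto.
        * intros l. destruct (Nat.leb l t); lia.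
        * intros i j _ _ Hij. destruct (Nat.leb i t) eqn:E1, (Nat.leb j t) eqn:E2; try lia.
          apply Nat.leb_gt in E1. apply Nat.leb_le in E2. lia.
      + unfold step_index. rewrite lam_dk_map, (prodR_const _ 1), pow1; [lra|].
        intros l _. destruct (Nat.leb l t); auto. }
  unfold ls in Hc. rewrite length_map, length_seq, !S_INR in Hc.
  pose proof (pos_INR d). lra.
Qed.

(** Split the first [j * K] free coordinates into [j] consecutive
    groups of [K] slots; a choice [c] picks one slot [c_i] in each group [i < j]. Putting
    the value [2] on the picked slots and [1] elsewhere gives [K^j] distinct multi-indices
    in [nabla_d] with [lambda_{d,k} >= lambda_2^j] (when [lambda_1 = 1]). *)

Definition slot (I : nat -> nat -> bool) d K i r := nth (i * K + r) (free_coords I d) 0%nat.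

Definition marked (I : nat -> nat -> bool) d K j (c : list nat) (l : nat) : bool :=
  existsb (fun i => Nat.eqb l (slot I d K i (nth i c 0%nat))) (seq 0 j).

Definition marked_index I d K j c : list nat :=
  map (fun l => if marked I d K j c l then 2%nat else 1%nat) (seq 1 d).

Section MarkedIndices.
Variables (I : nat -> nat -> bool) (d K j : nat).
Hypothesis Hjk : (j * K <= b_of I d)%nat.

Lemma slot_free i r : (i < j)%nat -> (r < K)%nat -> In (slot I d K i r) (free_coords I d).
Proof. intros **. unfold slot. apply nth_In. rewrite <- b_of_free. nia. Qed.

Lemma slot_injective i r i' r' : (i < j)%nat -> (r < K)%nat -> (i' < j)%nat -> (r' < K)%nat ->
  slot I d K i r = slot I d K i' r' -> i = i' /\ r = r'.
Proof.
  intros Hi Hr Hi' Hr' E. unfold slot in E.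
  assert (HN : NoDup (free_coords I d)) by (apply NoDup_filter, seq_NoDup).
  rewrite (NoDup_nth (free_coords I d) 0%nat) in HN.
  apply HN in E; try (rewrite <- b_of_free; nia).
  assert (i = i'); [|subst; lia].
  destruct (Nat.lt_total i i') as [Hlt|[Heq|Hlt]]; auto; exfalso.
  - assert (S i * K <= i' * K)%nat by (apply Nat.mul_le_mono_r; lia). simpl in *. lia.
  - assert (S i' * K <= i * K)%nat by (apply Nat.mul_le_mono_r; lia). simpl in *. lia.
Qed.

Lemma marked_spec c l : (forall i, (i < j)%nat -> (nth i c 0%nat < K)%nat) ->
  marked I d K j c l = true <-> exists i, (i < j)%nat /\ l = slot I d K i (nth i c 0%nat).
Proof.
  intros Hc. unfold marked. rewrite existsb_exists. split.
  - intros [i [Hi E]]. apply in_seq in Hi. apply Nat.eqb_eq in E. exists i. split; [lia|auto].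
  - intros [i [Hi E]]. exists i. split; [apply in_seq; lia|apply Nat.eqb_eq; auto].
Qed.

Definition valid_choice (c : list nat) := length c = j /\ forall i, (i < j)%nat -> (nth i c 0%nat < K)%nat.

Lemma words_valid_choice c : In c (words (seq 0 K) j) -> valid_choice c.
Proof.
  intros Hc. apply In_words_inv in Hc. destruct Hc as [Hl Hx]. split; auto.
  intros i Hi. assert (In (nth i c 0%nat) (seq 0 K)) by (apply Hx, nth_In; lia).
  apply in_seq in H. lia.
Qed.

Lemma marked_index_injective c c' : valid_choice c -> valid_choice c' ->
  marked_index I d K j c = marked_index I d K j c' -> c = c'.
Proof.
  intros [Hl Hn] [Hl' Hn'] E.
  apply nth_ext with (d := 0%nat) (d' := 0%nat); [lia|]. intros i Hi. rewrite Hl in Hi.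
  set (l := slot I d K i (nth i c 0%nat)).
  assert (Hl1 : In l (seq 1 d)) by (pose proof (slot_free i _ Hi (Hn i Hi)) as Hf;
    apply In_free_coords in Hf; apply in_seq; lia).
  pose proof (ext_in_map E l Hl1) as Hg. cbn beta in Hg.
  assert (Hq : marked I d K j c l = true) by (apply marked_spec; eauto).
  rewrite Hq in Hg. destruct (marked I d K j c' l) eqn:Hq'; [|discriminate].
  apply marked_spec in Hq'; auto. destruct Hq' as [i' [Hi' E']].
  apply slot_injective in E'; auto. destruct E' as [<- ?]; auto.
Qed.

Lemma marked_index_in_nabla c : admissible_I I -> valid_choice c ->
  in_nabla_sym I d (marked_index I d K j c).
Proof.
  intros HI [_ Hn].
  (* marked coordinates are free, so the index is constant on the symmetric ones *)
  assert (Hsym : forall l, I d l = true -> marked I d K j c l = false).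
  { intros l Hl'. destruct (marked I d K j c l) eqn:Hq; auto. apply marked_spec in Hq; auto.
    destruct Hq as [i [Hi ->]]. pose proof (slot_free i _ Hi (Hn i Hi)) as Hf.
    apply In_free_coords in Hf. destruct Hf as [_ Hf]. congruence. }
  apply in_nabla_map; auto.
  - intros l. destruct (marked I d K j c l); lia.
  - intros i i' Hi Hi' _. rewrite !Hsym; auto.
Qed.

Lemma marked_index_value lam c : lam 1%nat = 1 -> 0 < lam 2%nat <= 1 -> valid_choice c ->
  lam_dk lam (marked_index I d K j c) >= lam 2%nat ^ j.
Proof.
  intros H1 H2 [_ Hn]. unfold marked_index. rewrite lam_dk_map.
  set (q := marked I d K j c).
  rewrite (prodR_filter _ q), (prodR_const _ (lam 2%nat) (filter q (seq 1 d))).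
  2:{ intros l Hl'. apply filter_In in Hl'. destruct Hl' as [_ ->]. auto. }
  rewrite (prodR_const _ 1 (filter (fun x => negb (q x)) (seq 1 d))).
  2:{ intros l Hl'. apply filter_In in Hl'. destruct Hl' as [_ E]. destruct (q l); [discriminate|auto]. }
  rewrite pow1, Rmult_1_r. apply Rle_ge, pow_antimono; auto.
  (* at most [j] coordinates are marked *)
  apply Nat.le_trans with (length (map (fun i => slot I d K i (nth i c 0%nat)) (seq 0 j)));
    [|rewrite length_map, length_seq; lia].
  apply NoDup_incl_length; [apply NoDup_filter, seq_NoDup|].
  intros l Hl'. apply filter_In in Hl'. destruct Hl' as [_ Hq]. apply marked_spec in Hq; auto.
  destruct Hq as [i [Hi ->]]. apply in_map_iff. exists i. split; auto. apply in_seq; lia.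
Qed.

Lemma marked_family lam : admissible_I I -> lam 1%nat = 1 -> 0 < lam 2%nat <= 1 ->
  exists ls, NoDup ls /\ length ls = (K ^ j)%nat /\
    forall k, In k ls -> in_nabla_sym I d k /\ lam_dk lam k >= lam 2%nat ^ j.
Proof.
  intros HI H1 H2. set (C := words (seq 0 K) j).
  exists (map (marked_index I d K j) C). split; [|split].
  - apply NoDup_map_on; [|apply NoDup_words, seq_NoDup].
    intros c c' Hc Hc'. apply marked_index_injective; apply words_valid_choice; auto.
  - rewrite length_map. unfold C. rewrite length_words, length_seq. auto.
  - intros k Hk. apply in_map_iff in Hk. destruct Hk as [c [<- Hc]].
    apply words_valid_choice in Hc.
    split; [apply marked_index_in_nabla|apply marked_index_value]; auto.
Qed.

End MarkedIndices.

(** Strong polynomial tractability with [lambda_1 = 1] bounds [b_d]: one group of [b_d]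
    slots gives [b_d] indices with [lambda_{d,k} >= lambda_2]. *)
Lemma b_bounded_of_SPT lam I C p : admissible_I I -> lam 1%nat = 1 -> 0 < lam 2%nat <= 1 ->
  (forall d eps, (1 <= d)%nat -> 0 < eps <= 1 -> info_compl_le lam I eps d (C * Rpower eps (- p))) ->
  b_bounded I.
Proof.
  intros HI H1 H2 H. exists (C * Rpower (Rpower (lam 2%nat / 2) (1/2)) (- p)). intros d Hd.
  destruct (marked_family I d (b_of I d) 1 ltac:(lia) lam HI H1 H2) as [ls [Hn [Hl Hk]]].
  rewrite Nat.pow_1_r in Hl. rewrite <- Hl.
  apply (count_family lam I d (lam 2%nat) (fun eps => C * Rpower eps (- p))); auto.
  intros k Hk'. destruct (Hk k Hk'). rewrite pow_1 in *. auto.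
Qed.

Lemma log_family_count lam K j C p q d : 0 < lam 2%nat <= 1 -> C > 0 -> (0 < K)%nat -> (1 <= d)%nat ->
  INR (K ^ j) <= C * Rpower (Rpower (lam 2%nat ^ j / 2) (1/2)) (- p) * Rpower (INR d) q ->
  INR j * (ln (INR K) + p / 2 * ln (lam 2%nat)) <= ln C + p / 2 * ln 2 + q * ln (INR d).
Proof.
  intros H2 HC HK Hd Hc.
  assert (Hd0 : 0 < INR d) by (apply lt_0_INR; lia).
  assert (HK0 : 0 < INR K) by (apply lt_0_INR; lia).
  assert (Hpj : 0 < lam 2%nat ^ j) by (apply pow_lt; lra).
  set (eps := Rpower (lam 2%nat ^ j / 2) (1/2)) in Hc.
  pose proof (Rpower_gt0 eps (- p)). pose proof (Rpower_gt0 (INR d) q).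
  apply ln_le in Hc; [|rewrite pow_INR; apply pow_lt; auto].
  rewrite pow_INR, ln_pow, !ln_mult, !ln_Rpower in Hc by (try apply Rmult_lt_0_compat; auto; lra).
  assert (Hle : ln eps = 1/2 * (INR j * ln (lam 2%nat) - ln 2)).
  { unfold eps. rewrite ln_Rpower. replace (lam 2%nat ^ j / 2) with (lam 2%nat ^ j * / 2) by reflexivity.
    rewrite ln_mult, ln_Rinv, ln_pow by (try apply Rinv_0_lt_compat; lra). lra. }
  rewrite Hle in Hc. lra.
Qed.

(** Polynomial tractability with [lambda_1 = 1] forces [b_d = O(ln d)]. Choose [K] with
    [ln K + (p/2) ln lambda_2 >= 1] and use [floor(b_d / K)] groups of [K] slots. *)
Lemma b_log_of_PT lam I C p q : admissible_I I -> lam 1%nat = 1 -> 0 < lam 2%nat <= 1 ->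
  C > 0 ->
  (forall d eps, (1 <= d)%nat -> 0 < eps <= 1 ->
     info_compl_le lam I eps d (C * Rpower eps (- p) * Rpower (INR d) q)) ->
  b_log I.
Proof.
  intros HI H1 H2 HC H.
  set (L2 := ln (lam 2%nat)).
  destruct (INR_unbounded (exp (1 - p / 2 * L2))) as [K HK].
  assert (HK0 : (0 < K)%nat) by (destruct K; [simpl in HK; pose proof (exp_pos (1 - p / 2 * L2)); lra|lia]).
  assert (HlnK : 1 <= ln (INR K) + p / 2 * L2).
  { assert (1 - p / 2 * L2 <= ln (INR K)); [|lra].
    rewrite <- (ln_exp (1 - p / 2 * L2)). apply ln_le; [apply exp_pos|lra]. }
  set (A0 := ln C + p / 2 * ln 2).
  exists (INR K * (2 * (1 + Rabs A0) + q)). intros d Hd.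
  set (b := b_of I d). set (j := (b / K)%nat).
  assert (Hjk : (j * K <= b)%nat) by (unfold j; rewrite Nat.mul_comm; apply Nat.Div0.mul_div_le).
  destruct (marked_family I d K j Hjk lam HI H1 H2) as [ls [Hn [Hl Hk]]].
  assert (Hpj : 0 < lam 2%nat ^ j <= 1) by (split; [apply pow_lt|apply pow_le_1]; lra).
  assert (Hc : INR (K ^ j) <= C * Rpower (Rpower (lam 2%nat ^ j / 2) (1/2)) (- p) * Rpower (INR d) q).
  { rewrite <- Hl.
    apply (count_family lam I d (lam 2%nat ^ j) (fun eps => C * Rpower eps (- p) * Rpower (INR d) q));
      auto; intros; apply H; auto; lia. }
  apply log_family_count in Hc; auto; [|lia]. fold L2 A0 in Hc.
  (* hence [j <= A0 + q ln d] and [b < K (j + 1)] *)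
  assert (Hj : INR j <= A0 + q * ln (INR d)).
  { pose proof (pos_INR j). assert (INR j <= INR j * (ln (INR K) + p / 2 * L2)) by nra. lra. }
  assert (Hb : INR b <= INR K * (INR j + 1)).
  { rewrite <- S_INR, <- mult_INR. apply le_INR.
    pose proof (Nat.div_mod b K ltac:(lia)). pose proof (Nat.mod_upper_bound b K ltac:(lia)).
    unfold j. nia. }
  assert (Hln2 : 1 <= 2 * ln (INR d)).
  { assert (ln 2 <= ln (INR d)) by (apply ln_le; [lra|]; replace 2 with (INR 2) by (simpl; lra); apply le_INR; lia).
    pose proof ln_lt_2. lra. }
  assert (INR j + 1 <= (2 * (1 + Rabs A0) + q) * ln (INR d)).
  { pose proof (Rle_abs A0). pose proof (Rabs_pos A0). nra. }
  fold b. apply Rle_trans with (INR K * (INR j + 1)); auto.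
  rewrite Rmult_assoc. apply Rmult_le_compat_l; [apply pos_INR|lra].
Qed.

Theorem theorem2 (lam : nat -> R) (I : nat -> nat -> bool)
  (Hlam : admissible_eigs lam) (HI : admissible_I I)
  (H2 : lam 2%nat > 0) (H1 : lam 1%nat <= 1) :
  (strongly_poly_tractable lam I <->
     ((exists tau, tau > 0 /\ in_ell lam tau) /\
      (lam 1%nat < 1 \/ (lam 1%nat = 1 /\ lam 2%nat < 1 /\ b_bounded I))))
  /\
  (poly_tractable lam I <->
     ((exists tau, tau > 0 /\ in_ell lam tau) /\
      (lam 1%nat < 1 \/ (lam 1%nat = 1 /\ b_log I)))).
Proof.
  assert (H2le : lam 2%nat <= 1) by (apply lam_le1; auto).
  split; split.
  - intros HS. pose proof HS as [C [p [HC [Hp H]]]]. split.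
    + exists p. split; auto. apply (ell_of_count_dim1 lam I C p); auto.
    + destruct H1 as [Hlt|Heq]; [left; auto|right]. split; [|split]; auto.
      * destruct H2le as [?|E]; auto. exfalso. apply (not_SPT_of_lam2_eq1 lam I); auto.
      * apply (b_bounded_of_SPT lam I C p); auto.
  - intros [Hell [Hlt|[Heq [H2lt Hb]]]].
    + apply SPT_of_lam1_lt1; auto.
    + apply SPT_of_lam2_lt1; auto.
  - intros [C [p [q [HC [Hp [_ H]]]]]]. split.
    + exists p. split; auto. apply (ell_of_count_dim1 lam I C p); auto. intros eps He.
      eapply card_le_mono; [apply H; auto|].
      simpl INR. rewrite Rpower_base1. lra.
    + destruct H1 as [Hlt|Heq]; [left; auto|right]. split; auto.
      apply (b_log_of_PT lam I C p q); auto.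
  - intros [Hell [Hlt|[Heq Hb]]].
    + apply SPT_implies_PT, SPT_of_lam1_lt1; auto.
    + apply PT_of_b_log; auto.
Qed.
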